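(* Let $\mathcal{H}_{DFdB}$ be the Dynkin–Faà di Bruno Hopf algebra with antipode $S$. For $n\ge1$ let $A_n$ be the $n\times n$ matrix with entries $(A_n)_{ij}=B_{n-i+2,\,n-j+1}(X_0,X_1,X_2,\dots)$, $1\le i,j\le n$ (so subdiagonal entries equal $1$ and entries below the subdiagonal equal $0$). Then $$S(X_n)=-\,\big|A_n\big|_{1n},$$ the negative of the quasideterminant of $A_n$ computed at the top right entry.
   Context: Noncommutative Bell polynomials: in the free associative algebra on letters $d_1,d_2,\dots$ with the derivation $\partial$ determined by $\partial(d_i)=d_{i+1}$ and the Leibniz rule, set $B_0=1$ and $B_n=d_1B_{n-1}+\partial(B_{n-1})$. Grading words by $|d_{j_1}\cdots d_{j_k}|=j_1+\dots+j_k$, $B_n$ is homogeneous of degree $n$; the partial Bell polynomial $B_{n,k}$ is the sum of the terms of $B_n$ consisting of words with exactly $k$ letters ($B_{n,k}=0$ if $k>n$, $B_{n,n}=d_1^n$). $B_{n,k}(X_0,X_1,X_2,\dots)$ denotes the result of substituting $d_i\mapsto X_{i-1}$. The Dynkin–Faà di Bruno Hopf algebra is the free associative algebra $\mathbb{K}\langle X_1,X_2,\dots\rangle$ with unit $X_0=1$, graded by $|X_n|=n$, with algebra-morphism coproduct $\Delta(X_n)=\sum_{k=0}^nB_{n+1,k+1}(X_0,X_1,\dots,X_n)\otimes X_k$ and counit $\epsilon(X_n)=\delta_{n,0}$; it is graded connected, hence has an antipode. Quasideterminant: for an $n\times n$ matrix $A=(a_{ij})$ over a noncommutative ring, with $A^{pq}$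 the matrix with row $p$ and column $q$ deleted (original indices kept), $|A|_{11}=a_{11}$ if $n=1$ and $|A|_{pq}=a_{pq}-\sum_{i\ne p,j\ne q}a_{pj}(|A^{pq}|_{ij})^{-1}a_{iq}$; for $A$ with $a_{i+1,i}=-1$, $a_{ij}=0$ for $i>j+1$, this equals $a_{1n}+\sum_{k\ge1}\sum_{1\le j_1<\cdots<j_k<n}a_{1j_1}a_{j_1+1,j_2}\cdots a_{j_k+1,n}$, and $|-A|_{1n}=-|A|_{1n}$. *)

From HB Require Import structures.
From mathcomp Require Import all_boot all_order all_algebra.
From mathcomp Require Import finmap.
From mathcomp.multinomials Require Import monalg.

Set Implicit Arguments.
Unset Strict Implicit.
Unset Printing Implicit Defensive.

Import GRing.Theory.
Local Open Scope ring_scope.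

(* Words: the free monoid on nat.  In the free algebra on d_1, d_2, ...     *)
(* the letter i stands for d_(i+1); in the free algebra on X_1, X_2, ...    *)
(* the letter i stands for X_(i+1).                                          *)
Notation word := (fmonom nat).

Notation FreeAlg K := {malg K[word]}.

Definition word2 := (word * word)%type.
HB.instance Definition _ := Choice.on word2.

Definition w2one : word2 := (mone, mone).
Definition w2mul (p q : word2) : word2 := (mmul p.1 q.1, mmul p.2 q.2).
Lemma w2mulA : associative w2mul.
Proof. by move=> [a b] [c d] [e f]; rewrite /w2mul /= !mulmA. Qed.
Lemma w2mul1m : left_id w2one w2mul.
Proof. by move=> [a b]; rewrite /w2mul /= !mul1m. Qed.
Lemma w2mulm1 : right_id w2one w2mul.
Proof. by move=> [a b]; rewrite /w2mul /= !mulm1. Qed.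
Lemma w2mul_eq1 (p q : word2) : w2mul p q = w2one -> p = w2one /\ q = w2one.
Proof.
case: p q => [a b] [c d] [] /unitm [-> ->] /unitm [-> ->]; by [].
Qed.
HB.instance Definition _ := Choice_isMonomialDef.Build word2
  w2mulA w2mul1m w2mulm1 w2mul_eq1.

(* The tensor square H (x) H, realised as the monoid algebra of pairs of    *)
(* words: K<W> (x) K<W> = K[W x W] canonically (as algebras).                *)
Notation TensorAlg K := {malg K[word2]}.

Section DFdB.
Variable K : fieldType.

Local Notation H := (FreeAlg K).
Local Notation H2 := (TensorAlg K).

Definition lext (V : lmodType K) (h : word -> V) (g : H) : V :=
  \sum_(w <- msupp g) g@_w *: h w.

Definition X (n : nat) : H := if n is m.+1 then << fmu m >> else 1.

(* letter i = d_(i+1); the derivation maps d_(i+1) to d_(i+2).        *)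
Definition dword (w : word) : H :=
  \sum_(j < size (fmonom_val w))
     << FMonom (set_nth 0%N (fmonom_val w) j (nth 0%N (fmonom_val w) j).+1) >>.
Definition deriv (g : H) : H := lext dword g.

Fixpoint bell (n : nat) : H :=
  if n is m.+1 then << fmu 0%N >> * bell m + deriv (bell m) else 1.

Definition pbell (n k : nat) : H :=
  \sum_(w <- msupp (bell n) | size (fmonom_val w) == k) << (bell n)@_w *g w >>.

(* Substitution d_i |-> X_(i-1), i.e. letter i |-> X_i (so d_1 |-> X_0 = 1). *)
Definition substX (g : H) : H :=
  lext (fun w : word => \prod_(i <- fmonom_val w) X i) g.

Definition bellX (n k : nat) : H := substX (pbell n k).

Definition tens (a b : H) : H2 :=
  \sum_(u <- msupp a) \sum_(v <- msupp b) << a@_u * b@_v *g (u, v) >>.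

Definition DeltaX (n : nat) : H2 :=
  \sum_(0 <= k < n.+1) tens (bellX n.+1 k.+1) (X k).

Definition Delta (g : H) : H2 :=
  lext (fun w : word => \prod_(i <- fmonom_val w) DeltaX i.+1) g.

(* counit: epsilon(X_n) = delta_(n,0), algebra morphism *)
Definition epsilon (g : H) : K := g@_mone.

Definition conv (f g : H -> H) (x : H) : H :=
  \sum_(p <- msupp (Delta x)) (Delta x)@_p *: (f << p.1 >> * g << p.2 >>).

Definition is_antipode (S : H -> H) : Prop :=
  (forall x : H, conv S id x = epsilon x *: 1) /\
  (forall x : H, conv id S x = epsilon x *: 1).

(* The matrix A_n, n = m+1, with (A_n)_(ij) = B_(n-i+2, n-j+1)(X), 1-based;  *)
(* with 0-based ordinals i0 = i-1, j0 = j-1 this is B_(n-i0+1, n-j0).        *)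
Definition Amat (m : nat) : 'M[H]_m.+1 :=
  \matrix_(i < m.+1, j < m.+1) bellX (m.+1 - i).+1 (m.+1 - j).

End DFdB.

Section Quasidet.
Variable R : ringType.

Fixpoint chainprod (a : nat -> nat -> R) (s : nat) (js : seq nat) (e : nat) : R :=
  if js is j :: js' then a s j * chainprod a j.+1 js' e else a s e.

(* For an (m+1)x(m+1) matrix A with a_(i+1,i) = -1 and a_(ij) = 0 for i > j+1:*)
(* |A|_(1n) = a_(1n) + sum_(k>=1) sum_(1<=j_1<...<j_k<n)                      *)
(*             a_(1 j_1) a_(j_1+1, j_2) ... a_(j_k+1, n),   n = m+1.            *)
(* The sum ranges over all subsets {j_1<...<j_k} of {1,...,n-1}.              *)
Definition qdet_hess_1n (m : nat) (A : 'M[R]_m.+1) : R :=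
  let a (i j : nat) := A (inord i.-1) (inord j.-1) in
  \sum_(J : {set 'I_m})
     chainprod a 1%N (sort leq [seq (val j).+1 | j in J]) m.+1.

(* For A with a_(i+1,i) = 1 and a_(ij) = 0 for i > j+1 (as A_n), -A is of   *)
(* the above shape and |A|_(1n) = - |-A|_(1n).                               *)
Definition qdet_1n (m : nat) (A : 'M[R]_m.+1) : R := - qdet_hess_1n (- A).

End Quasidet.

From Pilot Require Import Defs.
From HB Require Import structures.
From mathcomp Require Import all_boot all_order all_algebra.
From mathcomp Require Import finmap.
From mathcomp.multinomials Require Import monalg.
From mathcomp Require Import zify.

(* Evaluating [m (id (x) S) Delta = eta epsilon] at [X_k], whose coproduct has
   leading term [B_(k+1,k+1)(X) (x) X_k = 1 (x) X_k], gives the recursion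
   [S(X_k) = - \sum_(q<k) B_(k+1,q+1)(X) S(X_q)] with [S(1) = 1].
   Expanding the Hessenberg quasideterminant of [-A_n] along its first row
   expresses it through the quasideterminants of the trailing principal
   blocks, and the trailing block of order [k] is [-A_k] because the entries
   of [A_n] only depend on [n - i] and [n - j]: so [-|A_n|_(1n)] satisfies the
   same recursion.  That [B_(k,k) = d_1^k] follows from homogeneity: all words
   of [B_k] have weight [k], and [d_1^k] is the only one with [k] letters. *)

Set Implicit Arguments.
Unset Strict Implicit.
Unset Printing Implicit Defensive.
Import GRing.Theory.
Local Open Scope ring_scope.

Section SubseqSum.
Variable R : pzRingType.

(* The sum of [F] over the increasing sequences with entries in [0, n). *)
Fixpoint subseq_sum (n : nat) (F : seq nat -> R) : R :=
  if n is n'.+1 then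
    subseq_sum n' (fun l => F (map succn l)) +
    subseq_sum n' (fun l => F (0%N :: map succn l))
  else F [::].

Lemma eq_subseq_sum n (F G : seq nat -> R) :
  F =1 G -> subseq_sum n F = subseq_sum n G.
Proof.
elim: n F G => [|n IHn] F G eqFG /=; first exact: eqFG.
by congr (_ + _); apply: IHn => l; apply: eqFG.
Qed.

Lemma mulr_subseq_sumr n x (F : seq nat -> R) :
  x * subseq_sum n F = subseq_sum n (fun l => x * F l).
Proof. by elim: n F => [|n IHn] F //=; rewrite mulrDr !IHn. Qed.

Lemma subseq_sum_head n (F : seq nat -> R) :
  subseq_sum n F =
  F [::] + \sum_(j < n)
             subseq_sum (n - j.+1) (fun l => F (val j :: map (addn j.+1) l)).
Proof.
elim: n F => [|n IHn] F /=; first by rewrite big_ord0 addr0.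
rewrite IHn big_ord_recl subn1 -addrA [X in _ + X]addrC; congr (_ + (_ + _)).
apply: eq_bigr => j _; apply: eq_subseq_sum => l /=.
by rewrite -map_comp.
Qed.

Lemma big_set_subseq_sum n (F : seq nat -> R) :
  \sum_(J : {set 'I_n}) F [seq val j | j in J] = subseq_sum n F.
Proof.
elim: n F => [|n IHn] F /=.
  rewrite (big_pred1 set0) => [|J]; first by rewrite /image_mem enum_set0.
  by apply/esym/eqP/setP => -[].
pose cons_set (p : bool * {set 'I_n}) : {set 'I_n.+1} :=
  (if p.1 then [set ord0] else set0) :|: lift ord0 @: p.2.
pose uncons_set (J : {set 'I_n.+1}) := (ord0 \in J, [set i | lift ord0 i \in J]).
have lift_cons p i : (lift ord0 i \in cons_set p) = (i \in p.2).
  rewrite in_setU mem_imset; last exact: lift_inj.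
  by case: p.1; rewrite ?in_set1 ?in_set0.
have ord0_cons p : (ord0 \in cons_set p) = p.1.
  rewrite in_setU; case: p.1; rewrite ?in_set1 ?eqxx //= in_set0 /=.
  by apply/imsetP => -[i _ /eqP]; rewrite (negbTE (neq_lift _ _)).
rewrite (reindex cons_set) /=; last first.
  exists uncons_set => [[b J] _|J _]; rewrite /uncons_set.
    by rewrite ord0_cons; congr pair; apply/setP => i; rewrite inE lift_cons.
  apply/setP => k; case: (unliftP ord0 k) => [i ->|->].
    by rewrite lift_cons inE.
  by rewrite ord0_cons.
rewrite -(pair_bigA _ (fun b J => F [seq val j | j in cons_set (b, J)])) /=.
rewrite big_bool /= addrC -!IHn; congr (_ + _); apply: eq_bigr => J _.
all: rewrite /image_mem /enum_mem -!enumT enum_ordSl /= ord0_cons filter_map /=.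
all: by rewrite (eq_filter (lift_cons (_, J))) -!map_comp.
Qed.

End SubseqSum.

Section HessenbergChains.
Variable R : nzRingType.
Implicit Types (a : nat -> nat -> R) (c : nat -> nat -> R).

Lemma chainprod_shift a k s js e :
  chainprod a (k + s) (map (addn k) js) (k + e) =
  chainprod (fun i j => a (k + i) (k + j)) s js e.
Proof. by elim: js s => [|j js IHjs] s //=; rewrite -addnS IHjs. Qed.

Definition hess_qdet a m : R :=
  subseq_sum m (fun l => chainprod a 1 (map succn l) m.+1).

Lemma hess_qdet_first_row a m :
  hess_qdet a m =
  a 1%N m.+1 + \sum_(j < m) a 1%N j.+1 *
                 hess_qdet (fun i k => a (j.+1 + i)%N (j.+1 + k)%N) (m - j.+1).
Proof.
rewrite /hess_qdet subseq_sum_head; congr (_ + _); apply: eq_bigr => j _.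
rewrite mulr_subseq_sumr; apply: eq_subseq_sum => l /=.
have -> : m.+1 = (j.+1 + (m - j.+1).+1)%N by have := ltn_ord j; lia.
rewrite -chainprod_shift -map_comp addn1; congr (_ * chainprod _ _ _ _).
by rewrite -map_comp; apply: eq_map => i /=; rewrite addnS.
Qed.

(* If [a] only depends on [(m+2-i, m+1-j)] through [c], its trailing principal
   blocks are of the same form, and the first-row expansion is the recursion
   defining [T]. *)
Lemma hess_qdet_rec c (T : nat -> R) :
  T 0%N = 1 -> (forall k, (0 < k)%N -> T k = \sum_(q < k) c k q * T q) ->
  forall m a,
    (forall i j, (0 < i <= m.+1)%N -> (0 < j <= m.+1)%N ->
       a i j = c (m.+2 - i)%N (m.+1 - j)%N) ->
  hess_qdet a m = T m.+1.
Proof.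
move=> T0 Trec; elim/ltn_ind=> m IHm a Ha.
rewrite hess_qdet_first_row Trec // big_ord_recl T0 mulr1; congr (_ + _).
  by rewrite Ha ?leqnn // subSS subn0 subnn.
rewrite [RHS](reindex_inj rev_ord_inj); apply: eq_bigr => j _ /=.
have ltjm := ltn_ord j.
have -> : hess_qdet (fun i k => a (j.+1 + i)%N (j.+1 + k)%N) (m - j.+1) = T (m - j)%N.
  have -> : (m - j = (m - j.+1).+1)%N by lia.
  apply: IHm => [|i k ri rk]; first lia.
  by rewrite Ha; [congr (c _ _) | lia | lia]; lia.
by rewrite Ha; [congr (c _ _ * T _) | lia | lia]; rewrite /bump /=; lia.
Qed.

End HessenbergChains.

Section MonoidAlgebra.
Variables (R : comNzRingType) (M : monomType).
Implicit Types (c : R) (x y : {malg R[M]}).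

Lemma malgUZ c (k : M) : << c *g k >> = c *: << k >> :> {malg R[M]}.
Proof.
by apply/malgP => k'; rewrite mcoeffZ !mcoeffU; case: eqP; rewrite ?mulr1 ?mulr0.
Qed.

Lemma commr_malgC c x : GRing.comm x c%:MP.
Proof.
rewrite /GRing.comm (monalgE x) mulr_suml mulr_sumr; apply: eq_bigr => u _.
by rewrite !malgM_def !fgmulUU mulm1 mul1m mulrC.
Qed.

Lemma malg_scalerAr c x y : c *: (x * y) = x * (c *: y).
Proof. by rewrite -!mul_malgC mulrA -commr_malgC mulrA. Qed.

Lemma sum_scale_mmap (T : choiceType) (h : T -> {malg R[M]}) (g : {malg R[T]}) :
  \sum_(w <- msupp g) g@_w *: h w = mmap (@malgC M R) h g.
Proof. by apply: eq_bigr => w _; rewrite mul_malgC. Qed.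

Lemma mmap_malgCU (T : choiceType) (h : T -> {malg R[M]}) c (t : T) :
  mmap (@malgC M R) h << c *g t >> = c *: h t.
Proof. by rewrite mmapU mul_malgC. Qed.

End MonoidAlgebra.

Section Coproduct.
Variable K : fieldType.
Local Notation H := (FreeAlg K).
Local Notation H2 := (TensorAlg K).

Lemma lextE (M : monomType) (h : word -> {malg K[M]}) (g : H) :
  lext h g = mmap (@malgC M K) h g.
Proof. exact: sum_scale_mmap. Qed.

Lemma convE (f g : H -> H) x :
  conv f g x =
  mmap (@malgC word K) (fun p : word2 => f << p.1 >> * g << p.2 >>) (Delta x).
Proof. exact: sum_scale_mmap. Qed.

Lemma conv_tens (S : {linear H -> H}) (a b : H) :
  mmap (@malgC word K) (fun p : word2 => << p.1 >> * S << p.2 >>) (tens a b) =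
  a * S b.
Proof.
rewrite [in RHS](monalgE a) [in RHS](monalgE b) linear_sum mulr_suml raddf_sum.
apply: eq_bigr => u _; rewrite raddf_sum mulr_sumr; apply: eq_bigr => v _ /=.
rewrite mmap_malgCU (malgUZ (a@_u)) (malgUZ (b@_v)) linearZ.
by rewrite -scalerAl -malg_scalerAr scalerA.
Qed.

Lemma Delta1 : Delta (1 : H) = 1.
Proof. by rewrite /Delta lextE mmap_malgCU scale1r fm1 big_nil. Qed.

Lemma Delta_X k : Delta (X K k.+1) = DeltaX K k.+1.
Proof. by rewrite /Delta lextE mmap_malgCU scale1r fmU big_seq1. Qed.

Lemma epsilon1 : epsilon (1 : H) = 1.
Proof. by rewrite /epsilon mcoeff1 eqxx. Qed.

Lemma epsilon_X k : epsilon (X K k.+1) = 0.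
Proof. by rewrite /epsilon mcoeffU1 fm1_eq1. Qed.

Lemma conv_idS_1 (S : {linear H -> H}) : conv id S 1 = S 1.
Proof.
rewrite convE Delta1 -[1 : H2]/<< w2one >>.
by rewrite mmap_malgCU scale1r mul1r.
Qed.

Lemma conv_idS_X (S : {linear H -> H}) k :
  conv id S (X K k.+1) = \sum_(j < k.+2) bellX K k.+2 j.+1 * S (X K j).
Proof.
rewrite convE Delta_X /DeltaX raddf_sum big_mkord.
by apply: eq_bigr => j _; exact: conv_tens.
Qed.

End Coproduct.

Section DiagonalBell.
Variable K : fieldType.
Local Notation H := (FreeAlg K).

Definition weight (w : word) : nat := sumn (map succn w).

Definition homogeneous (n : nat) (g : H) : Prop :=
  {in msupp g, forall w, weight w = n}.

Lemma homogeneousD n (g1 g2 : H) :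
  homogeneous n g1 -> homogeneous n g2 -> homogeneous n (g1 + g2).
Proof.
move=> hg1 hg2 w /(fsubsetP (msuppD_le _ _)); rewrite in_fsetU.
by case/orP; [apply: hg1 | apply: hg2].
Qed.

Lemma homogeneous_sum n (I : eqType) (r : seq I) (F : I -> H) :
  {in r, forall i, homogeneous n (F i)} -> homogeneous n (\sum_(i <- r) F i).
Proof.
move=> hF; rewrite big_seq; elim/big_rec: _ => [|i g ri hg].
  by move=> w; rewrite msupp0 in_fset0.
exact: homogeneousD (hF i ri) hg.
Qed.

Lemma homogeneousZ n c (g : H) : homogeneous n g -> homogeneous n (c *: g).
Proof. by move=> hg w /(fsubsetP (msuppZ_le _ _)); apply: hg. Qed.

Lemma homogeneousU c (w : word) : homogeneous (weight w) << c *g w >>.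
Proof. by move=> w' /(fsubsetP msuppU_le); rewrite in_fset1 => /eqP ->. Qed.

Lemma weightM (u v : word) : weight (mmul u v) = (weight u + weight v)%N.
Proof. by rewrite /weight fmM map_cat sumn_cat. Qed.

Lemma sumn_set_nth_succ (s : seq nat) j : (j < size s)%N ->
  sumn (map succn (set_nth 0%N s j (nth 0%N s j).+1)) = (sumn (map succn s)).+1.
Proof. by elim: s j => [|x s IHs] [|j] //= lt_j; rewrite IHs // addnS. Qed.

Lemma homogeneous_dword (w : word) : homogeneous (weight w).+1 (dword K w).
Proof.
apply: homogeneous_sum => j _.
have := @homogeneousU 1 (FMonom (set_nth 0%N w j (nth 0%N w j).+1)).
by rewrite {1}/weight /= sumn_set_nth_succ.
Qed.

Lemma homogeneous_bell n : homogeneous n (bell K n).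
Proof.
elim: n => [|n IHn] /=.
  by have := @homogeneousU 1 mone; rewrite /weight fm1.
apply: homogeneousD.
  rewrite malgM_def fgmulUg; apply: homogeneous_sum => w w_bell.
  have -> : n.+1 = weight (mmul (fmu 0%N) w).
    by rewrite weightM (IHn _ w_bell) /weight fmU.
  exact: homogeneousU.
rewrite /Defs.deriv /lext; apply: homogeneous_sum => w w_bell.
by apply/homogeneousZ; rewrite -(IHn _ w_bell); apply: homogeneous_dword.
Qed.

Definition d1_pow (n : nat) : word := FMonom (nseq n 0%N).

Lemma mcoeffUM (u v : word) (g : H) : (<< u >> * g)@_(mmul u v) = g@_v.
Proof.
rewrite (monalgE g) mulr_sumr !raddf_sum; apply: eq_bigr => w _ /=.
by rewrite malgM_def fgmulUU mul1r !mcoeffU fmP !fmM eqseq_cat // eqxx -fmP.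
Qed.

Lemma mcoeff_dword_d1_pow (w : word) n : (dword K w)@_(d1_pow n) = 0.
Proof.
rewrite /dword raddf_sum big1 //= => j _; rewrite mcoeffU1.
case: eqP => // /(congr1 (fun w : word => nth 0%N w j)).
by rewrite /= nth_set_nth /= eqxx nth_nseq if_same.
Qed.

Lemma bell_coef_d1_pow n : (bell K n)@_(d1_pow n) = 1.
Proof.
elim: n => [|n IHn] /=.
  by rewrite mcoeff1 (_ : d1_pow 0 = mone) //; apply/eqP; rewrite fmP fm1.
rewrite mcoeffD; have -> : (Defs.deriv (bell K n))@_(d1_pow n.+1) = 0.
  rewrite /Defs.deriv /lext raddf_sum big1 //= => w _.
  by rewrite mcoeffZ mcoeff_dword_d1_pow mulr0.
rewrite addr0 (_ : d1_pow n.+1 = mmul (fmu 0%N) (d1_pow n)) ?mcoeffUM //.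
by apply/eqP; rewrite fmP fmM fmU.
Qed.

Lemma sumn_map_succn (s : seq nat) : sumn (map succn s) = (sumn s + size s)%N.
Proof. by elim: s => //= x s ->; rewrite addnS addSn addnA. Qed.

Lemma sumn_eq0_nseq (s : seq nat) : sumn s = 0%N -> s = nseq (size s) 0%N.
Proof.
by elim: s => //= x s IHs /eqP; rewrite addn_eq0 => /andP[/eqP-> /eqP/IHs <-].
Qed.

Lemma pbell_diag n : pbell K n n = << d1_pow n >>.
Proof.
have d1_pow_bell : d1_pow n \in msupp (bell K n).
  by rewrite -mcoeff_neq0 bell_coef_d1_pow oner_neq0.
have size_bell :
    {in msupp (bell K n), forall w : word, (size w == n) = (w == d1_pow n)}.
  move=> w /homogeneous_bell; rewrite /weight sumn_map_succn => wt_w.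
  apply/eqP/eqP => [size_w|->]; last by rewrite /= size_nseq.
  apply/eqP; rewrite fmP /= -size_w; apply/eqP/sumn_eq0_nseq.
  by apply: (@addIn (size w)); rewrite add0n wt_w size_w.
rewrite /pbell big_seq_cond.
rewrite (eq_bigl (fun w => (w \in msupp (bell K n)) && (w == d1_pow n))); last first.
  by move=> w /=; case w_bell: (w \in msupp _) => //=; apply: size_bell.
rewrite -big_seq_cond -big_filter filter_pred1_uniq ?fset_uniq //.
by rewrite big_seq1 bell_coef_d1_pow.
Qed.

Lemma bellX_diag n : bellX K n n = 1.
Proof.
rewrite /bellX pbell_diag /substX lextE mmap_malgCU scale1r.
by rewrite big1_seq // => i /andP[_]; rewrite mem_nseq => /andP[_ /eqP ->].
Qed.

End DiagonalBell.

Section AntipodeRecursion.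
Variables (K : fieldType) (S : {linear FreeAlg K -> FreeAlg K}).
Hypothesis S_right : forall x, conv id S x = epsilon x *: 1.

Lemma antipode1 : S 1 = 1.
Proof. by have := S_right 1; rewrite conv_idS_1 epsilon1 scale1r. Qed.

Lemma antipode_X k : (0 < k)%N ->
  S (X K k) = \sum_(q < k) - bellX K k.+1 q.+1 * S (X K q).
Proof.
case: k => // k _; have := S_right (X K k.+1).
rewrite conv_idS_X epsilon_X scale0r big_ord_recr /= bellX_diag mul1r => /eqP.
rewrite addrC addr_eq0 => /eqP ->; rewrite -sumrN.
by apply: eq_bigr => q _; rewrite mulNr.
Qed.

End AntipodeRecursion.

Lemma qdet_hess_1nE (R : nzRingType) m (A : 'M[R]_m.+1) :
  qdet_hess_1n A = hess_qdet (fun i j => A (inord i.-1) (inord j.-1)) m.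
Proof.
rewrite /qdet_hess_1n /hess_qdet -big_set_subseq_sum; apply: eq_bigr => J _.
have sorted_J : sorted leq [seq val j | j in J].
  apply: (subseq_sorted leq_trans _ (iota_sorted 0 m)); rewrite -val_enum_ord.
  by apply: map_subseq; rewrite enumT; apply: filter_subseq.
have -> : [seq (val j).+1 | j in J] = map succn [seq val j | j in J].
  by rewrite /image_mem -map_comp.
rewrite sorted_sort //; last by rewrite sorted_map.
by move=> ? ? ?; apply: leq_trans.
Qed.

Lemma opp_Amat_entry (K : fieldType) m i j :
  (0 < i <= m.+1)%N -> (0 < j <= m.+1)%N ->
  (- Amat K m) (inord i.-1) (inord j.-1) = - bellX K (m.+2 - i).+1 (m.+1 - j).+1.
Proof.
move=> /andP[i_gt0 i_le] /andP[j_gt0 j_le]; rewrite !mxE !inordK; [|lia|lia].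
have -> : (m.+1 - i.-1 = m.+2 - i)%N by lia.
by have -> : (m.+1 - j.-1 = (m.+1 - j).+1)%N by lia.
Qed.

Theorem mainTheorem3 (K : fieldType) (S : {linear FreeAlg K -> FreeAlg K}) :
  is_antipode S ->
  forall m : nat, S (X K m.+1) = - qdet_1n (Amat K m).
Proof.
move=> [_ S_right] m; rewrite /qdet_1n opprK qdet_hess_1nE.
apply/esym/(@hess_qdet_rec _ (fun k q => - bellX K k.+1 q.+1) (fun k => S (X K k))).
- exact: antipode1 S_right.
- exact: antipode_X S_right.
- exact: opp_Amat_entry.
Qed.
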